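(* Let $\mathbf K$ be a commutative field, $p,q\in\mathbb N$ and $A\in\mathrm{Rec}_{p\times q}(\mathbf K)$. The following are equivalent: (i) the set $\{A[U,W]:(U,W)\in\mathcal M_{p\times q}\}\subset\mathbf K$ is finite; (ii) for every $B\in\overline{A}^{rec}$ the set $\{B[U,W]:(U,W)\in\mathcal M_{p\times q}\}$ is finite; (iii) the recursive set-closure $\{\rho(S,T)A:(S,T)\in\mathcal M_{p\times q}\}$ is finite; (iv) the shift-monoid of $A$, i.e. the set of restrictions of all shift maps $\rho(S,T)$, $(S,T)\in\mathcal M_{p\times q}$, to $\overline{A}^{rec}$, is finite.
   Context: $\mathcal M_{p\times q}$ is the monoid of pairs $(U,W)$ of words of common length with $U$ over $\{0,\dots,p-1\}$, $W$ over $\{0,\dots,q-1\}$, under concatenation. For $A:\mathcal M_{p\times q}\to\mathbf K$ (values $A[U,W]$), shift maps act by $(\rho(S,T)A)[U,W]=A[US,WT]$. $\overline{A}^{rec}$ is the linear span of $\{\rho(S,T)A\}$ (an invariant subspace for all shift maps), and $\mathrm{Rec}_{p\times q}(\mathbf K)$ is the set of $A$ with $\dim\overline{A}^{rec}<\infty$. *)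

From HB Require Import structures.
From mathcomp Require Import all_boot all_order all_algebra.
Set Implicit Arguments. Unset Strict Implicit. Unset Printing Implicit Defensive.
Import GRing.Theory.
Local Open Scope ring_scope.

(* The monoid M_{p x q}: pairs (U,W) of words of common length,
   U over {0..p-1} = 'I_p, W over {0..q-1} = 'I_q. *)
Definition pw (p q : nat) := {x : seq 'I_p * seq 'I_q | size x.1 == size x.2}.

Lemma pw_cat_proof p q (a b : pw p q) :
  size ((val a).1 ++ (val b).1) == size ((val a).2 ++ (val b).2).
Proof. by rewrite !size_cat (eqP (valP a)) (eqP (valP b)). Qed.

Definition pw_cat p q (a b : pw p q) : pw p q :=
  exist _ ((val a).1 ++ (val b).1, (val a).2 ++ (val b).2) (pw_cat_proof a b).

Definition rho (K : fieldType) p q (ST : pw p q) (A : pw p q -> K) : pw p q -> K :=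
  fun UW => A (pw_cat UW ST).

(* B lies in the linear span  \bar{A}^{rec}  of {rho(S,T) A} *)
Definition in_rec_closure (K : fieldType) p q (A B : pw p q -> K) : Prop :=
  exists (n : nat) (c : 'I_n -> K) (s : 'I_n -> pw p q),
    B = (fun UW => \sum_(i < n) c i * rho (s i) A UW).

Definition in_span (K : fieldType) p q n (F : 'I_n -> (pw p q -> K)) (B : pw p q -> K) : Prop :=
  exists c : 'I_n -> K, B = (fun UW => \sum_(i < n) c i * F i UW).

(* A in Rec_{p x q}(K): dim \bar{A}^{rec} < oo, i.e. \bar{A}^{rec} is spanned
   by finitely many of its elements *)
Definition is_rec (K : fieldType) p q (A : pw p q -> K) : Prop :=
  exists (n : nat) (F : 'I_n -> (pw p q -> K)),
    (forall i, in_rec_closure A (F i)) /\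
    (forall B, in_rec_closure A B -> in_span F B).

Definition finite_values (K : fieldType) p q (B : pw p q -> K) : Prop :=
  exists s : seq K, forall UW, B UW \in s.

Definition finite_shift_set (K : fieldType) p q (A : pw p q -> K) : Prop :=
  exists (n : nat) (f : 'I_n -> (pw p q -> K)),
    forall ST, exists i, rho ST A = f i.

Definition finite_shift_monoid (K : fieldType) p q (A : pw p q -> K) : Prop :=
  exists (n : nat) (g : 'I_n -> pw p q),
    forall ST, exists i, forall B, in_rec_closure A B -> rho ST B = rho (g i) B.

From mathcomp Require Import all_boot all_order all_algebra.
From Stdlib Require Import Classical FunctionalExtensionality.
Set Implicit Arguments. Unset Strict Implicit. Unset Printing Implicit Defensive.
Import GRing.Theory.
Local Open Scope ring_scope.

(* The span of the shifts of A is finite-dimensional, so finitely many points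
   l determine its elements by evaluation. Hence the restriction of rho(S,T)
   to this span is determined by the values G_i[x(S,T)], x in l, of a finite
   spanning family G. When A takes finitely many values, so does each G_i, and
   only finitely many restrictions occur: (i) implies (iv). *)

Lemma finite_representatives (Y : Type) (W : eqType) (L : seq W) (key : Y -> W)
    (R : Y -> Y -> Prop) :
  (forall y, key y \in L) -> (forall y y', key y = key y' -> R y y') ->
  exists n (g : 'I_n -> Y), forall y, exists i, R y (g i).
Proof.
move=> keyL keyR.
suff [n [g gP]] : exists n (g : 'I_n -> Y),
    forall y, key y \in L -> exists i, R y (g i).
  by exists n, g => y; apply: gP.
elim: L {keyL} => [|w L [n [g gP]]].
  by exists 0, (fun i : 'I_0 => False_rect _ (notF (ltn_ord i))).
have [[y0 key_y0]|no_y0] := classic (exists y0, key y0 = w).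
  exists n.+1, (fun i => if unlift ord_max i is Some j then g j else y0).
  move=> y; rewrite in_cons => /predU1P [key_y|/gP [j Rj]].
    by exists ord_max; rewrite unlift_none; apply: keyR; rewrite key_y key_y0.
  by exists (lift ord_max j); rewrite liftK.
exists n, g => y; rewrite in_cons => /predU1P [key_y|]; last exact: gP.
by case: no_y0; exists y.
Qed.

Lemma finite_seqs_over (W : eqType) (s : seq W) m :
  exists L : seq (seq W), forall t, size t = m -> all (mem s) t -> t \in L.
Proof.
elim: m => [|m [L LP]]; first by exists [:: [::]] => [[]].
exists [seq a :: t | a <- s, t <- L] => [[|a t]] //= [size_t] /andP [sa st].
by apply/allpairsP; exists (a, t); split => //; apply: LP.
Qed.

Lemma finite_values_lincomb (K : fieldType) (X : Type) (s : seq K) m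
    (c : 'I_m -> K) (f : 'I_m -> X -> K) :
  (forall i x, f i x \in s) -> exists L : seq K, forall x, \sum_i c i * f i x \in L.
Proof.
elim: m c f => [|m IHm] c f fs; first by exists [:: 0] => x; rewrite big_ord0 mem_seq1.
have [L LP] := IHm (c \o widen_ord (leqnSn m)) (f \o widen_ord (leqnSn m)) (fun i => fs _).
exists [seq a + c ord_max * b | a <- L, b <- s] => x; rewrite big_ord_recr /=.
by apply/allpairsP; eexists (_, f ord_max x); split; [apply: LP | apply: fs |].
Qed.

Section DeterminingPoints.

Variables (K : fieldType) (X : eqType) (n : nat) (G : 'I_n -> X -> K).

Definition eval_row (x : X) : 'rV[K]_n := \row_i G i x.

Definition eval_mx (l : seq X) : 'M[K]_(size l, n) :=
  \matrix_(j, i) G i (tnth (in_tuple l) j).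

Lemma lincomb_eval_row (c : 'I_n -> K) y :
  \sum_i c i * G i y = (eval_row y *m \col_i c i) 0 0.
Proof. by rewrite !mxE; apply: eq_bigr => i _; rewrite !mxE mulrC. Qed.

Lemma row_eval_mx l j : row j (eval_mx l) = eval_row (tnth (in_tuple l) j).
Proof. by apply/rowP => i; rewrite !mxE. Qed.

Lemma eval_row_sub x l : x \in l -> (eval_row x <= eval_mx l)%MS.
Proof. by case/(tnthP (in_tuple l)) => j ->; rewrite -row_eval_mx row_sub. Qed.

Lemma eval_mx_sub l l' : {subset l <= l'} -> (eval_mx l <= eval_mx l')%MS.
Proof.
by move=> sub_ll'; apply/row_subP => j; rewrite row_eval_mx eval_row_sub ?sub_ll' ?mem_tnth.
Qed.

Lemma exists_spanning_points : exists l, forall y, (eval_row y <= eval_mx l)%MS.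
Proof.
(* A list that does not span can be extended to raise the rank, which is at most n. *)
have grow k : (exists l, forall y, (eval_row y <= eval_mx l)%MS) \/
              exists l, (k <= \rank (eval_mx l))%N.
  elim: k => [|k [spanning|[l rank_l]]]; [by right; exists [::] | by left |].
  have [spanning|/not_all_ex_not [y y_out]] := classic (forall y, (eval_row y <= eval_mx l)%MS).
    by left; exists l.
  right; exists (y :: l); apply: leq_ltn_trans rank_l (rank_ltmx _).
  rewrite ltmxE eval_mx_sub => [|x]; last by rewrite in_cons => ->; rewrite orbT.
  apply/negP => sub_l; apply/y_out/submx_trans/sub_l/eval_row_sub.
  exact: mem_head.
by case: (grow n.+1) => [//|[l]]; rewrite ltnNge rank_leq_col.
Qed.

Lemma exists_determining_points : exists l : seq X, forall c1 c2 : 'I_n -> K,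
  {in l, forall x, \sum_i c1 i * G i x = \sum_i c2 i * G i x} ->
  forall y, \sum_i c1 i * G i y = \sum_i c2 i * G i y.
Proof.
have [l spanning] := exists_spanning_points; exists l => c1 c2 eq_l y.
have eq_mx : eval_mx l *m \col_i c1 i = eval_mx l *m \col_i c2 i.
  apply/row_matrixP => j; rewrite !row_mul row_eval_mx; apply/rowP => k.
  by rewrite (ord1 k) -!lincomb_eval_row eq_l ?mem_tnth.
by rewrite !lincomb_eval_row; have /submxP [D ->] := spanning y; rewrite -!mulmxA eq_mx.
Qed.

End DeterminingPoints.

Section Shifts.

Variables (K : fieldType) (p q : nat).
Implicit Types (A B : pw p q -> K) (ST UW : pw p q).

Definition pw_nil : pw p q := exist _ ([::], [::]) erefl.

Lemma pw_cat_assoc UW ST ST' : pw_cat (pw_cat UW ST) ST' = pw_cat UW (pw_cat ST ST').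
Proof. by apply: val_inj; rewrite /= !catA. Qed.

Lemma pw_nil_cat ST : pw_cat pw_nil ST = ST.
Proof. by apply: val_inj; case: ST => [[]]. Qed.

Lemma pw_cat_nil ST : pw_cat ST pw_nil = ST.
Proof. by apply: val_inj; case: ST => [[U W] ?] /=; rewrite !cats0. Qed.

Lemma rho_nil A : rho pw_nil A = A.
Proof. by apply: functional_extensionality => UW; rewrite /rho pw_cat_nil. Qed.

Lemma rho_rho ST ST' A : rho ST (rho ST' A) = rho (pw_cat ST ST') A.
Proof. by apply: functional_extensionality => UW; rewrite /rho pw_cat_assoc. Qed.

Lemma rho_at_nil ST A : rho ST A pw_nil = A ST.
Proof. by rewrite /rho pw_nil_cat. Qed.

Lemma in_rec_closure_self A : in_rec_closure A A.
Proof.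
exists 1, (fun=> 1), (fun=> pw_nil); rewrite rho_nil.
by apply: functional_extensionality => UW; rewrite big_ord1 mul1r.
Qed.

Lemma in_rec_closure_rho ST A B : in_rec_closure A B -> in_rec_closure A (rho ST B).
Proof.
case=> m [c [s ->]]; exists m, c, (fun i => pw_cat ST (s i)).
by apply: functional_extensionality => UW; apply: eq_bigr => i _; rewrite -rho_rho.
Qed.

Lemma finite_values_rec_closure A B :
  finite_values A -> in_rec_closure A B -> finite_values B.
Proof.
case=> s As [m [c [t ->]]].
by apply: (finite_values_lincomb c (f := fun i => rho (t i) A)) => i UW; apply: As.
Qed.

Lemma in_span_determining_points n (G : 'I_n -> pw p q -> K) :
  exists l : seq (pw p q), forall B1 B2,
    in_span G B1 -> in_span G B2 -> {in l, B1 =1 B2} -> B1 = B2.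
Proof.
have [l detG] := exists_determining_points G.
exists l => _ _ [c1 ->] [c2 ->] eq_l.
by apply: functional_extensionality; apply: detG.
Qed.

Lemma finite_shift_set_values A : finite_shift_set A -> finite_values A.
Proof.
case=> n [f fP]; exists [seq f i pw_nil | i <- enum 'I_n] => ST.
by rewrite -rho_at_nil; have [i ->] := fP ST; rewrite map_f ?mem_enum.
Qed.

Lemma finite_shift_monoid_set A : finite_shift_monoid A -> finite_shift_set A.
Proof.
case=> n [g gP]; exists n, (fun i => rho (g i) A) => ST.
by have [i rhoP] := gP ST; exists i; apply/rhoP/in_rec_closure_self.
Qed.

Lemma finite_values_shift_monoid A :
  is_rec A -> finite_values A -> finite_shift_monoid A.
Proof.
case=> n [G [G_rec spanG]] finA.
have [l detG] := in_span_determining_points G.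
have [S GS] : exists S : seq K, forall i UW, G i UW \in S.
  have /fin_all_exists [s sP] i : exists s : seq K, forall UW, G i UW \in s.
    exact: finite_values_rec_closure finA (G_rec i).
  exists (flatten [seq s i | i <- enum 'I_n]) => i UW.
  by apply/flatten_mapP; exists i; rewrite ?mem_enum.
pose key ST := [seq G ix.1 (pw_cat ix.2 ST) | ix <- [seq (i, x) | i <- enum 'I_n, x <- l]].
have [L keyL] := finite_seqs_over S (n * size l).
apply: (finite_representatives (L := L) (key := key)
  (R := fun ST ST' => forall B, in_rec_closure A B -> rho ST B = rho ST' B)).
  move=> ST; apply: keyL; first by rewrite size_map size_allpairs size_enum_ord.
  by apply/allP => _ /mapP [ix _ ->]; apply: GS.
move=> ST ST' /eq_in_map eq_key B /spanG [d ->].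
have rhoG i : rho ST (G i) = rho ST' (G i).
  apply: detG; try exact/spanG/in_rec_closure_rho/G_rec.
  by move=> x lx; apply: (eq_key (i, x)); rewrite allpairs_f ?mem_enum.
apply: functional_extensionality => UW; apply: eq_bigr => i _.
exact: (congr1 (fun f => d i * f UW) (rhoG i)).
Qed.

End Shifts.

Theorem mainTheorem16 (K : fieldType) (p q : nat) (A : pw p q -> K) :
  is_rec A ->
  [/\ finite_values A <-> (forall B, in_rec_closure A B -> finite_values B),
      finite_values A <-> finite_shift_set A
    & finite_values A <-> finite_shift_monoid A].
Proof.
move=> recA; have i_iv := finite_values_shift_monoid recA.
have iv_iii := @finite_shift_monoid_set K p q A.
have iii_i := @finite_shift_set_values K p q A.
split; split => [finA|].
- by move=> B; apply: finite_values_rec_closure.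
- by apply; apply: in_rec_closure_self.
- by apply/iv_iii/i_iv.
- exact: iii_i.
- exact: i_iv.
- by move/iv_iii/iii_i.
Qed.
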